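(* For all integers $\ell\ge1$, $k\ge1$, $n\ge1$, $$f_\ell(n,k)\le 2^{\lfloor \ell/2\rfloor}\cdot\lfloor \ell/2\rfloor!\cdot n^{\lfloor (\ell+1)/2\rfloor}.$$ Moreover, if $k\ge\lfloor\log_2(\ell+1)\rfloor$, then $$f_\ell(n,k)\ge \left\lfloor\frac nk\right\rfloor^{\lfloor\log_2(\ell+1)\rfloor}.$$
   Context: For a set $A$ and integer $k\ge1$, the Kneser graph $KG(A,k)$ has vertex set the family of all $k$-element subsets of $A$, two vertices $X,Y$ being adjacent iff $X\cap Y=\emptyset$; $KG(n,k)$ denotes one with an $n$-element base set. The xor-product of graphs $G_1,\dots,G_\ell$ has vertex set $V(G_1)\times\dots\times V(G_\ell)$, two vertices being adjacent iff they are adjacent in an odd number of coordinates. $f_\ell(n,k)$ is the clique number of the xor-product of $\ell$ copies of $KG(n,k)$; equivalently, the maximum size of a family $\mathcal S$ of subsets of $A_1\cup\dots\cup A_\ell$ ($A_i$ pairwise disjoint, $|A_i|=n$) with $|S\cap A_i|=k$ for all $S\in\mathcal S$ and all $i$, such that for distinct $S,T\in\mathcal S$ the number of $i$ with $S\cap T\cap A_i=\emptyset$ is odd. *)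

From mathcomp Require Import all_boot.
Set Implicit Arguments. Unset Strict Implicit. Unset Printing Implicit Defensive.

(* A vertex of the xor-product of l copies of KG(n,k): an l-tuple of subsets
   of 'I_n (coordinate i lives in the i-th copy of the base set). *)
Definition xvertex (l n : nat) := {ffun 'I_l -> {set 'I_n}}.

Definition is_xvertex (l n k : nat) (X : xvertex l n) : bool :=
  [forall i, #|X i| == k].

Definition kneser_adj (n : nat) (A B : {set 'I_n}) : bool := [disjoint A & B].

Definition xor_adj (l n : nat) (X Y : xvertex l n) : bool :=
  odd #|[set i : 'I_l | kneser_adj (X i) (Y i)]|.

Definition is_xclique (l n k : nat) (C : {set xvertex l n}) : bool :=
  [forall X in C, is_xvertex k X] &&
  [forall X in C, forall Y in C, (X != Y) ==> xor_adj X Y].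

Definition f_xor (l n k : nat) : nat :=
  \max_(C : {set xvertex l n} | is_xclique k C) #|C|.

From mathcomp Require Import all_boot all_algebra ring.
Set Implicit Arguments. Unset Strict Implicit. Unset Printing Implicit Defensive.

(* For the upper bound, call C a clique on a coordinate set I if its members
   have k-sets in the coordinates of I and any two of them are disjoint in an
   odd number of coordinates of I.  For i in I and a point x, the members
   having x in coordinate i are pairwise non-disjoint there, hence form a
   clique on I \ {i}.  If |I| is odd, counting incidences in one coordinate
   gives k |C| <= n * (bound for |I| - 1).  If |I| is even, a fixed member S
   meets every member in some coordinate of I, so C is covered by the |I| k
   cliques on smaller coordinate sets obtained from the points of S.
   Induction on |I| gives 2^m m! n^m for |I| = 2m and, after dividing by k,
   2^m m! n^(m+1) for |I| = 2m + 1.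

   For the lower bound, put t = floor(log2 (l+1)) and q = floor(n/k), and
   label 2^t - 1 coordinates by the nonempty subsets A of {1..t}.  A word a in
   [q]^t gives in coordinate A the k-set {(r, a_(s_A r)) : r < k} of [k] x [q],
   where s_A maps [k] onto A (here t <= k is used).  Two distinct words a, b
   are disjoint in coordinate A exactly when A is inside {j | a_j <> b_j},
   which happens in 2^|{j | a_j <> b_j}| - 1 coordinates, an odd number. *)

Lemma card_set_sum (T : finType) (C : {set T}) (P : pred T) :
  #|[set x in C | P x]| = \sum_(x in C) P x.
Proof.
by rewrite -sum1dep_card big_mkcondr; apply: eq_bigr => x _; case: (P x).
Qed.

Lemma double_count_card (I T : finType) (A : {set I}) (C : {set T})
    (P : I -> T -> bool) :
  \sum_(i in A) #|[set x in C | P i x]| = \sum_(x in C) #|[set i in A | P i x]|.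
Proof.
under eq_bigr => i _ do rewrite card_set_sum.
by rewrite exchange_big; apply: eq_bigr => x _; rewrite (card_set_sum A (P^~ x)).
Qed.

Lemma card_le_sum_cover (I T : finType) (A : {set I}) (C : {set T})
    (P : I -> T -> bool) :
  (forall x, x \in C -> exists2 i, i \in A & P i x) ->
  #|C| <= \sum_(i in A) #|[set x in C | P i x]|.
Proof.
move=> covC; rewrite double_count_card -sum1_card; apply: leq_sum => x xC.
have [i iA Pix] := covC x xC; rewrite card_gt0; apply/set0Pn; exists i.
by rewrite inE iA.
Qed.

Lemma card_nonempty_subsets (T : finType) (D : {set T}) :
  #|powerset D :\ set0| = (2 ^ #|D|).-1.
Proof.
by rewrite -card_powerset (cardsD1 set0 (powerset D)) powersetE sub0set.
Qed.

Lemma odd_card_nonempty_subsets (T : finType) (D : {set T}) :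
  D != set0 -> odd #|powerset D :\ set0|.
Proof.
rewrite -card_gt0 card_nonempty_subsets => D_gt0.
have := oddX 2 #|D|; rewrite -[2 ^ _]prednK ?expn_gt0 //= orbF gtn_eqF //.
by move/negbFE.
Qed.

Section UpperBound.
Variables (l n k : nat).

Definition xclique_on (I : {set 'I_l}) (C : {set xvertex l n}) : Prop :=
  (forall X i, X \in C -> i \in I -> #|X i| = k) /\
  (forall X Y, X \in C -> Y \in C -> X != Y ->
     odd #|[set i in I | [disjoint X i & Y i]]|).

Definition xlink (C : {set xvertex l n}) (i : 'I_l) (x : 'I_n) :=
  [set X in C | x \in X i].

Lemma xclique_on_setT C : is_xclique k C -> xclique_on [set: 'I_l] C.
Proof.
case/andP=> /forall_inP uniC /forall_inP adjC; split=> [X i XC _ | X Y XC YC XY].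
  by have /forallP/(_ i)/eqP := uniC X XC.
have /forall_inP/(_ Y YC)/implyP/(_ XY) := adjC X XC.
rewrite /xor_adj /kneser_adj.
by rewrite (_ : [set i in [set: 'I_l] | _] = [set i | [disjoint X i & Y i]]) //;
   apply/setP => i; rewrite !inE.
Qed.

Lemma card_le1_xclique_on_set0 C : xclique_on set0 C -> #|C| <= 1.
Proof.
case=> _ oddC; apply/card_le1_eqP => X Y XC YC; apply/eqP/contraT => XY.
have := oddC Y X YC XC XY.
rewrite (_ : [set i in set0 | _] = set0) ?cards0 //.
by apply/setP => i; rewrite !inE.
Qed.

Lemma xclique_on_xlink (I : {set 'I_l}) C i (x : 'I_n) :
  i \in I -> xclique_on I C -> xclique_on (I :\ i) (xlink C i x).
Proof.
move=> iI [uniC oddC]; split=> [X j | X Y].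
  by rewrite !inE => /andP[XC _] /andP[_ jI]; apply: uniC.
rewrite !inE => /andP[XC xX] /andP[YC xY] XY.
rewrite (_ : [set j in I :\ i | _] = [set j in I | [disjoint X j & Y j]]).
  exact: oddC.
apply/setP => j; rewrite !inE; case: eqVneq => [->|//].
by rewrite iI -setI_eq0; apply/esym/negbTE/set0Pn; exists x; rewrite inE xX.
Qed.

Lemma sum_card_xlink (I : {set 'I_l}) C i : i \in I -> xclique_on I C ->
  \sum_(x in [set: 'I_n]) #|xlink C i x| = k * #|C|.
Proof.
move=> iI [uniC _]; rewrite double_count_card -sum1_card big_distrr.
apply: eq_bigr => X XC; rewrite -(uniC X i XC iI).
by rewrite [RHS]muln1; apply: eq_card => x; rewrite !inE.
Qed.

Lemma card_xclique_on_odd (I : {set 'I_l}) C i M : i \in I -> xclique_on I C ->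
  (forall C', xclique_on (I :\ i) C' -> #|C'| <= M) -> k * #|C| <= n * M.
Proof.
move=> iI cliqueC boundM; rewrite -(sum_card_xlink iI cliqueC).
apply: (@leq_trans (\sum_(x in [set: 'I_n]) M)).
  by apply: leq_sum => x _; apply/boundM/xclique_on_xlink.
by rewrite sum_nat_const cardsT card_ord.
Qed.

Hypothesis k_gt0 : 0 < k.

(* An even number of coordinates cannot consist of an odd number of disjoint
   ones and no others. *)
Lemma xclique_on_meet (I : {set 'I_l}) C S T :
  ~~ odd #|I| -> 0 < #|I| -> xclique_on I C -> S \in C -> T \in C ->
  exists2 i, i \in I & ~~ [disjoint S i & T i].
Proof.
move=> evenI I_gt0 [uniC oddC] SC TC.
have [<-|TS] := eqVneq T S.
  have [i iI] : exists i, i \in I by apply/set0Pn; rewrite -card_gt0.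
  exists i => //; rewrite -setI_eq0 setIid -card_gt0 (uniC T i TC iI) //.
have /set0Pn[i] : [set i in I | ~~ [disjoint S i & T i]] != set0.
  apply: contraNneq evenI => meet0.
  rewrite -(cardsID [set i | [disjoint T i & S i]] I).
  rewrite (_ : I :\: _ = set0) ?cards0 ?addn0.
    by rewrite (eq_card (_ : _ =i [set i in I | [disjoint T i & S i]])) ?oddC //;
       move=> i; rewrite !inE andbC.
  apply/setP => i; move/setP/(_ i): meet0; rewrite !inE disjoint_sym.
  by rewrite andbC.
by rewrite inE => /andP[]; exists i.
Qed.

Lemma card_xclique_on_even (I : {set 'I_l}) C B :
  ~~ odd #|I| -> 0 < #|I| -> xclique_on I C ->
  (forall i C', i \in I -> xclique_on (I :\ i) C' -> k * #|C'| <= B) ->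
  #|C| <= #|I| * B.
Proof.
move=> evenI I_gt0 cliqueC boundB.
have [->|[S SC]] := set_0Vmem C; first by rewrite cards0.
pose meetS i := [set T in C | ~~ [disjoint S i & T i]].
have coverC : #|C| <= \sum_(i in I) #|meetS i|.
  apply: card_le_sum_cover => T TC.
  exact: xclique_on_meet evenI I_gt0 cliqueC SC TC.
apply: (leq_trans coverC); rewrite -sum_nat_const; apply: leq_sum => i iI.
rewrite -(leq_pmul2l k_gt0).
have coverS : #|meetS i| <= \sum_(x in S i) #|[set T in meetS i | x \in T i]|.
  apply: card_le_sum_cover => T; rewrite inE -setI_eq0 => /andP[_ /set0Pn[x]].
  by rewrite inE => /andP[xS xT]; exists x.
apply: (leq_trans (leq_mul (leqnn k) coverS)); rewrite big_distrr /=.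
apply: (@leq_trans (\sum_(x in S i) B)); last first.
  by rewrite sum_nat_const (proj1 cliqueC S i SC iI).
apply: leq_sum => x _.
apply: leq_trans (boundB i _ iI (xclique_on_xlink x iI cliqueC)).
rewrite leq_mul2l subset_leq_card ?orbT //.
by apply/subsetP => T; rewrite !inE => /andP[/andP[-> _] ->].
Qed.

Lemma card_xclique_on_bound m : forall (I : {set 'I_l}) C, xclique_on I C ->
  (#|I| = m.*2 -> #|C| <= 2 ^ m * m`! * n ^ m) /\
  (#|I| = m.*2.+1 -> k * #|C| <= 2 ^ m * m`! * n ^ m.+1).
Proof.
have cardD1 (I : {set 'I_l}) i : i \in I -> #|I :\ i| = #|I|.-1.
  by move=> iI; rewrite (cardsD1 i I) iI.
have nonempty (I : {set 'I_l}) j : #|I| = j.+1 -> exists i, i \in I.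
  by move=> cardI; apply/set0Pn; rewrite -card_gt0 cardI.
elim: m => [|m IHm] I C cliqueC.
  split=> [/eqP | cardI]; first by rewrite cards_eq0 => /eqP I0;
    apply: card_le1_xclique_on_set0; rewrite -I0.
  have [i iI] := nonempty I 0 cardI.
  apply: leq_trans (card_xclique_on_odd (M := 1) iI cliqueC _) _; last first.
    by rewrite muln1 expn1 expn0 fact0 !mul1n.
  have /eqP Ii0 : I :\ i == set0 by rewrite -cards_eq0 cardD1 // cardI.
  by rewrite Ii0; apply: card_le1_xclique_on_set0.
have even_case (J : {set 'I_l}) D : xclique_on J D -> #|J| = m.+1.*2 ->
    #|D| <= 2 ^ m.+1 * m.+1`! * n ^ m.+1.
  move=> cliqueD cardJ.
  apply: leq_trans (card_xclique_on_even _ _ cliqueD _) _.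
  - by rewrite cardJ odd_double.
  - by rewrite cardJ double_gt0.
  - move=> i D' iJ cliqueD'; apply: (proj2 (IHm _ _ cliqueD')).
    by rewrite cardD1 // cardJ doubleS.
  rewrite cardJ factS [2 ^ m.+1]expnS -mul2n.
  by apply: eq_leq; ring.
split; first exact: even_case.
move=> cardI; have [i iI] := nonempty I _ cardI.
set M := 2 ^ m.+1 * m.+1`! * n ^ m.+1.
apply: leq_trans (card_xclique_on_odd (M := M) iI cliqueC _) _.
  by move=> C' cliqueC'; apply: even_case cliqueC' _; rewrite cardD1 // cardI.
by rewrite /M [n ^ m.+2]expnS; apply: eq_leq; ring.
Qed.

Lemma card_xclique_on (I : {set 'I_l}) C : xclique_on I C ->
  #|C| <= 2 ^ (#|I|./2) * (#|I|./2)`! * n ^ uphalf #|I|.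
Proof.
move=> cliqueC; have := odd_double_half #|I|.
case: (odd #|I|) => /= cardI; last first.
  rewrite -{3}cardI add0n uphalf_double.
  exact: (proj1 (card_xclique_on_bound _ cliqueC)).
rewrite -{3}cardI /= add0n doubleK.
apply: leq_trans (leq_pmull _ k_gt0) _.
exact: (proj2 (card_xclique_on_bound _ cliqueC)).
Qed.

End UpperBound.

Lemma f_xor_le l n k : 0 < k ->
  f_xor l n k <= 2 ^ (l./2) * (l./2)`! * n ^ ((l.+1)./2).
Proof.
move=> k_gt0; apply/bigmax_leqP => C /xclique_on_setT/(card_xclique_on k_gt0).
by rewrite cardsT card_ord.
Qed.

Section LowerBound.
Variables (l n k t q : nat).
Hypotheses (k_gt0 : 0 < k) (t_le_k : t <= k) (exp2t_le_l1 : 2 ^ t <= l.+1)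
  (q1k_le_n : q.+1 * k <= n).

Definition nonempty_labels : {set {set 'I_t}} := powerset [set: 'I_t] :\ set0.

(* Coordinates beyond the 2^t - 1 nonempty labels get the empty label, on which
   all words below agree. *)
Definition label (i : 'I_l) : {set 'I_t} := nth set0 (enum nonempty_labels) i.

Lemma label_inj : {in [pred i | label i != set0] &, injective label}.
Proof.
have label_lt i : label i != set0 -> i < size (enum nonempty_labels).
  rewrite ltnNge; apply: contra => /(nth_default set0) lab0.
  by rewrite /label lab0.
move=> i1 i2 /label_lt lt1 /label_lt lt2 /eqP.
by rewrite (nth_uniq set0 lt1 lt2 (enum_uniq _)) => /eqP/val_inj.
Qed.

Lemma label_surj A : A != set0 -> exists i, label i = A.
Proof.
move=> A0; have A_lab : A \in enum nonempty_labels.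
  by rewrite mem_enum in_setD1 A0 powersetE subsetT.
have lt_l : index A (enum nonempty_labels) < l.
  rewrite -ltnS; apply: leq_trans exp2t_le_l1.
  rewrite -[2 ^ t](prednK (expn_gt0 2 t)) ltnS.
  have := card_nonempty_subsets [set: 'I_t]; rewrite cardsT card_ord => <-.
  by rewrite cardE index_mem.
by exists (Ordinal lt_l); rewrite /label nth_index.
Qed.

(* Maps 'I_k onto a nonempty A, fixing the elements of A (this needs t <= k). *)
Definition select (A : {set 'I_t}) (r : 'I_k) : option 'I_t :=
  if [pick j in A | val j == val r] is Some j then Some j else [pick j in A].

Lemma select_mem (A : {set 'I_t}) r j : select A r = Some j -> j \in A.
Proof.
rewrite /select; case: pickP => [j' /andP[j'A _] [<-] //|_].
by case: pickP => [j' j'A [<-] //|].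
Qed.

Lemma select_None A r : (select A r == None) = (A == set0).
Proof.
rewrite /select; case: pickP => [j /andP[jA _]|_].
  by apply/esym/set0Pn; exists j.
case: pickP => [j jA|A0]; first by apply/esym/set0Pn; exists j.
by apply/esym/eqP/setP => j; rewrite inE A0.
Qed.

Lemma select_widen (A : {set 'I_t}) j :
  j \in A -> select A (widen_ord t_le_k j) = Some j.
Proof.
move=> jA; rewrite /select; case: pickP => [j' /andP[_ /eqP j'j]|].
  by congr Some; apply: val_inj.
by move/(_ j); rewrite jA eqxx.
Qed.

Definition word := {ffun 'I_t -> 'I_q.+1}.

Definition letter A (a : word) (r : 'I_k) : 'I_q.+1 :=
  if select A r is Some j then a j else ord0.

Definition code_set A (a : word) : {set 'I_k * 'I_q.+1} :=
  [set (r, letter A a r) | r : 'I_k].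

Lemma card_code_set A a : #|code_set A a| = k.
Proof. by rewrite card_imset ?card_ord // => r1 r2 []. Qed.

Lemma mem_code_set A a r x : ((r, x) \in code_set A a) = (x == letter A a r).
Proof. by apply/imsetP/eqP => [[r' _ [-> ->]] // | ->]; exists r. Qed.

Lemma disjoint_code_set A (a b : word) :
  [disjoint code_set A a & code_set A b] =
    [forall r, letter A a r != letter A b r].
Proof.
rewrite disjoint_subset; apply/subsetP/forallP => [sub r | neq [r x]].
  by have := sub (r, letter A a r); rewrite !inE !mem_code_set eqxx => /(_ isT).
by rewrite !inE !mem_code_set => /eqP->; exact: neq r.
Qed.

Lemma letters_differ A (a b : word) :
  [forall r, letter A a r != letter A b r] =
    (A != set0) && (A \subset [set j | a j != b j]).
Proof.
apply/forallP/andP => [neq | [A0 /subsetP Aab] r].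
  split.
    apply: contra (neq (Ordinal k_gt0)) => /eqP->.
    by rewrite /letter (eqP (_ : select set0 _ == None)) ?select_None.
  apply/subsetP => j jA; have := neq (widen_ord t_le_k j).
  by rewrite /letter select_widen // inE.
rewrite /letter; case E: (select A r) => [j|].
  by have := Aab j (select_mem E); rewrite inE.
by move: A0; rewrite -(select_None A r) E.
Qed.

Lemma card_code_alphabet : #|{: 'I_k * 'I_q.+1}| <= n.
Proof. by rewrite card_prod !card_ord mulnC. Qed.

Definition embed (p : 'I_k * 'I_q.+1) : 'I_n :=
  widen_ord card_code_alphabet (enum_rank p).

Lemma embed_inj : injective embed.
Proof. by move=> p1 p2 /(congr1 val) /= eq_rank; apply/enum_rank_inj/val_inj. Qed.

Definition xcode (a : word) : xvertex l n :=
  [ffun i => embed @: code_set (label i) a].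

Lemma card_xcode a i : #|xcode a i| = k.
Proof. by rewrite ffunE card_imset ?card_code_set //; exact: embed_inj. Qed.

Lemma disjoint_xcode a b i : [disjoint xcode a i & xcode b i] =
  (label i != set0) && (label i \subset [set j | a j != b j]).
Proof.
rewrite !ffunE -!setI_eq0 -imsetI; last by move=> ? ? _ _; exact: embed_inj.
by rewrite imset_eq0 setI_eq0 disjoint_code_set letters_differ.
Qed.

Lemma odd_card_disjoint_xcode a b : a != b ->
  odd #|[set i | [disjoint xcode a i & xcode b i]]|.
Proof.
move=> ab; set D := [set j | a j != b j].
have D0 : D != set0.
  apply: contra ab => /eqP D0; apply/eqP/ffunP => j.
  by apply/eqP/negPn; rewrite -(in_set (fun j => a j != b j)) -/D D0 inE.
rewrite -(card_in_imset (f := label)); last first.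
  move=> i1 i2; rewrite !inE !disjoint_xcode => /andP[L1 _] /andP[L2 _].
  exact: label_inj.
rewrite (_ : label @: _ = powerset D :\ set0) ?odd_card_nonempty_subsets //.
apply/setP => A; rewrite in_setD1 powersetE; apply/imsetP/idP.
  by case=> i; rewrite inE disjoint_xcode => + ->.
case/andP=> A0 AD; have [i Li] := label_surj A0.
by exists i; rewrite // inE disjoint_xcode Li A0.
Qed.

Lemma xcode_inj : injective xcode.
Proof.
move=> a b ab; apply/eqP/contraT => /odd_card_disjoint_xcode.
rewrite (_ : [set i | _] = set0) ?cards0 //; apply/setP => i; rewrite !inE ab.
by rewrite -setI_eq0 setIid; apply/negbTE; rewrite -card_gt0 card_xcode.
Qed.

Lemma is_xclique_xcode : is_xclique k (xcode @: [set: word]).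
Proof.
apply/andP; split; apply/forall_inP => _ /imsetP[a _ ->].
  by apply/forallP => i; rewrite card_xcode.
apply/forall_inP => _ /imsetP[b _ ->]; apply/implyP => ab.
by apply: odd_card_disjoint_xcode; apply: contraNneq ab => ->.
Qed.

Lemma f_xor_ge_xcode : q.+1 ^ t <= f_xor l n k.
Proof.
have <- : #|xcode @: [set: word]| = q.+1 ^ t.
  by rewrite card_imset ?cardsT ?card_ffun ?card_ord //; exact: xcode_inj.
exact: leq_bigmax_cond is_xclique_xcode.
Qed.

End LowerBound.

Lemma f_xor_ge l n k t : 0 < k -> 0 < t -> t <= k -> 2 ^ t <= l.+1 ->
  (n %/ k) ^ t <= f_xor l n k.
Proof.
move=> k_gt0 t_gt0 t_le_k exp2t_le; case q1E: (n %/ k) => [|q].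
  by rewrite exp0n.
by apply: f_xor_ge_xcode k_gt0 t_le_k exp2t_le _; rewrite -q1E leq_divM.
Qed.

Theorem theorem1p3 (l k n : nat) (hl : 1 <= l) (hk : 1 <= k) (hn : 1 <= n) :
  f_xor l n k <= 2 ^ (l./2) * (l./2)`! * n ^ ((l.+1)./2) /\
  (trunc_log 2 l.+1 <= k -> (n %/ k) ^ (trunc_log 2 l.+1) <= f_xor l n k).
Proof.
split; first exact: f_xor_le.
move=> log_le_k; apply: f_xor_ge log_le_k (trunc_logP _ _) => //.
by rewrite trunc_log_gt0 ltnS.
Qed.
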